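(* For all real $z$ with $0<|z|\le 1$, \[ \sum_{k=1}^\infty\frac{\zeta(2k)z^{2k}}{(k+1)(2k+1)} = \frac12-\frac{\zeta(3)}{2\pi^2z^2}+\frac{\operatorname{Cl}_3(2\pi z)}{2\pi^2z^2}+\frac{\operatorname{Cl}_2(2\pi z)}{2\pi z}. \]
   Context: $\zeta$ is the Riemann zeta function. $\operatorname{Cl}_2(x)=\sum_{k\ge1}\sin(kx)/k^2$ and $\operatorname{Cl}_3(x)=\sum_{k\ge1}\cos(kx)/k^3$ are Clausen functions. *)

From Stdlib Require Import Reals.
From Coquelicot Require Import Coquelicot.
Open Scope R_scope.

Definition zeta (s : nat) : R := Series (fun n : nat => / (INR (n + 1)) ^ s).

Definition Cl2 (x : R) : R :=
  Series (fun n : nat => sin (INR (n + 1) * x) / (INR (n + 1)) ^ 2).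
Definition Cl3 (x : R) : R :=
  Series (fun n : nat => cos (INR (n + 1) * x) / (INR (n + 1)) ^ 3).

From Stdlib Require Import Reals Lra Lia.
From Coquelicot Require Import Coquelicot.
Open Scope R_scope.

(** Writing [w = t / (2 PI)], expanding [w^2 / (n^2 - w^2)] geometrically and summing over [n]
    first turns the partial fractions of the cotangent into
    [sum_(k >= 1) zeta (2k) w^(2k) = 1/2 - (PI w / 2) cot (PI w)].  Multiply by [x - t] and
    integrate over [0, x], where [x = 2 PI z].  Termwise, the left side gives [x^2 / 2] times the
    series of the theorem: the remainders are at most [zeta 2 w^(2K) / (1 - w^2)], whose pole at
    [w = 1] is cancelled by [x - t <= 2 PI (1 - w)].  On the right, [(t/4) cot (t/2)] is the limit
    of [(t/2) sum_(n <= N) sin (n t)] against integrable weights, and integrating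
    [(x - t) (t/2) sin (n t)] produces the Clausen terms.  Both this limit and the cotangent
    expansion come from the telescoping identity
    [2 sin (t/2) cos (n t + c) = sin ((n + 1/2) t + c) - sin ((n - 1/2) t + c)]
    and the Riemann-Lebesgue lemma for functions continuous on a closed interval. *)

(* Stated over [R], so that pointwise goals are real equations amenable to [ring] and [field]. *)
Lemma is_series_ext_R (a b : nat -> R) (l : R) :
  (forall n, a n = b n) -> is_series a l -> is_series b l.
Proof. apply is_series_ext. Qed.

Lemma sum_n_succ (u : nat -> R) n : sum_n u (S n) = sum_n u n + u (S n).
Proof. exact (sum_Sn u n). Qed.

Lemma sum_n_nonneg (u : nat -> R) N : (forall n, 0 <= u n) -> 0 <= sum_n u N.
Proof.
  intro Hu. induction N as [|N IH].
  - rewrite sum_O. apply Hu.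
  - rewrite sum_n_succ. specialize (Hu (S N)). lra.
Qed.

Lemma is_series_nonneg_sum_n_le (u : nat -> R) l N :
  (forall n, 0 <= u n) -> is_series u l -> sum_n u N <= l.
Proof.
  intros Hu Hl. apply (is_lim_seq_incr_compare (sum_n u) l Hl).
  intro n. rewrite sum_n_succ. specialize (Hu (S n)). lra.
Qed.

Lemma is_series_nonneg_term_le (u : nat -> R) l n :
  (forall n, 0 <= u n) -> is_series u l -> u n <= l.
Proof.
  intros Hu Hl. apply Rle_trans with (sum_n u n); [|exact (is_series_nonneg_sum_n_le u l n Hu Hl)].
  destruct n as [|n].
  - rewrite sum_O. lra.
  - rewrite sum_n_succ. pose proof (sum_n_nonneg u n Hu). lra.
Qed.

Lemma is_series_le (a b : nat -> R) la lb :
  (forall n, a n <= b n) -> is_series a la -> is_series b lb -> la <= lb.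
Proof.
  intros Hab Ha Hb.
  refine (is_lim_seq_le (sum_n a) (sum_n b) la lb _ Ha Hb).
  intro N. apply sum_n_m_le, Hab.
Qed.

Lemma is_series_nonneg_bounded (u : nat -> R) B :
  (forall n, 0 <= u n) -> (forall N, sum_n u N <= B) -> exists l, is_series u l /\ l <= B.
Proof.
  intros Hu HB.
  destruct (ex_finite_lim_seq_incr (sum_n u) B) as [l Hl].
  - intro n. rewrite sum_n_succ. specialize (Hu (S n)). lra.
  - exact HB.
  - exists l. split; [exact Hl|].
    exact (is_lim_seq_le _ _ _ _ HB Hl (is_lim_seq_const B)).
Qed.

Lemma is_lim_seq_sum_n (f : nat -> nat -> R) (l : nat -> R) K :
  (forall k, is_lim_seq (fun N => f N k) (l k)) ->
  is_lim_seq (fun N => sum_n (f N) K) (sum_n l K).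
Proof.
  intro Hf. induction K as [|K IH].
  - rewrite sum_O. apply (is_lim_seq_ext (fun N => f N O)); [|apply Hf].
    intro N. now rewrite sum_O.
  - rewrite sum_n_succ. apply (is_lim_seq_ext (fun N => sum_n (f N) K + f N (S K))).
    + intro N. now rewrite sum_n_succ.
    + exact (is_lim_seq_plus' _ _ _ _ IH (Hf (S K))).
Qed.

Section NonnegativeDoubleSeries.

Variables (a : nat -> nat -> R) (row : nat -> R) (S : R).
Hypothesis a_nonneg : forall n k, 0 <= a n k.
Hypothesis is_series_row : forall n, is_series (a n) (row n).
Hypothesis is_series_rows : is_series row S.

Let row_nonneg n : 0 <= row n.
Proof.
  apply Rle_trans with (a n O); [apply a_nonneg|].
  apply (is_series_nonneg_term_le (a n)); [apply a_nonneg | apply is_series_row].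
Qed.

Lemma sum_n_columns_le (col : nat -> R) :
  (forall k, is_series (fun n => a n k) (col k)) -> forall K, sum_n col K <= S.
Proof.
  intros Hcol K.
  refine (is_lim_seq_le (fun N => sum_n (fun k => sum_n (fun n => a n k) N) K) (sum_n row)
    (sum_n col K) S _ (is_lim_seq_sum_n _ col K Hcol) is_series_rows).
  intro N. rewrite <- sum_n_switch. apply sum_n_m_le. intro n.
  apply is_series_nonneg_sum_n_le; [apply a_nonneg | apply is_series_row].
Qed.

Lemma ex_series_column k : ex_series (fun n => a n k).
Proof.
  destruct (is_series_nonneg_bounded (fun n => a n k) S) as [l [Hl _]].
  - intro n. apply a_nonneg.
  - intro N. apply Rle_trans with (sum_n row N).
    + apply sum_n_m_le. intro n.
      apply (is_series_nonneg_term_le (a n)); [apply a_nonneg | apply is_series_row].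
    + apply is_series_nonneg_sum_n_le; [exact row_nonneg | exact is_series_rows].
  - now exists l.
Qed.

End NonnegativeDoubleSeries.

Lemma is_series_swap_nonneg (a : nat -> nat -> R) (row : nat -> R) (S : R) :
  (forall n k, 0 <= a n k) -> (forall n, is_series (a n) (row n)) -> is_series row S ->
  is_series (fun k => Series (fun n => a n k)) S.
Proof.
  intros Ha Hrow HS.
  set (col k := Series (fun n => a n k)).
  assert (Hcol : forall k, is_series (fun n => a n k) (col k))
    by (intro k; apply Series_correct, (ex_series_column a row S Ha Hrow HS)).
  assert (Hcol_nonneg : forall k, 0 <= col k).
  { intro k. apply Rle_trans with (a O k); [apply Ha|].
    exact (is_series_nonneg_term_le (fun n => a n k) (col k) O (fun n => Ha n k) (Hcol k)). }
  destruct (is_series_nonneg_bounded col S Hcol_nonneg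
              (sum_n_columns_le a row S Ha Hrow HS col Hcol))
    as [T [HT HTS]].
  assert (HST : S <= T).
  { refine (is_lim_seq_le (sum_n row) (fun _ => T) S T _ HS (is_lim_seq_const T)).
    exact (sum_n_columns_le (fun k n => a n k) col T (fun k n => Ha n k) Hcol HT row Hrow). }
  replace S with T by lra. exact HT.
Qed.

Lemma is_series_telescope (u : nat -> R) (l : R) :
  is_lim_seq u l -> is_series (fun n => u n - u (S n)) (u O - l).
Proof.
  intro Hu.
  assert (Hsum : forall N, sum_n (fun n => u n - u (S n)) N = u O - u (S N)).
  { induction N as [|N IH].
    - now rewrite sum_O.
    - rewrite sum_n_succ, IH. lra. }
  refine (is_lim_seq_ext (fun N => u O - u (S N)) _ (Finite (u O - l)) _ _);
    [intro N; now rewrite Hsum|].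
  apply (is_lim_seq_minus' _ _ _ _ (is_lim_seq_const (u O))).
  now apply -> is_lim_seq_incr_1.
Qed.

Lemma is_series_geom_succ q : 0 <= q < 1 -> is_series (fun k => q ^ (k + 1)) (q / (1 - q)).
Proof.
  intro Hq.
  assert (Hgeom := is_series_scal_r q _ _ (is_series_geom q ltac:(rewrite Rabs_pos_eq; lra))).
  replace (q / (1 - q)) with (/ (1 - q) * q) by (field; lra).
  revert Hgeom. apply is_series_ext_R. intro k.
  now rewrite Nat.add_1_r, <- tech_pow_Rmult, Rmult_comm.
Qed.

Lemma is_series_tail (c : nat -> R) (C : R) K :
  is_series c C -> is_series (fun k => c (S K + k)%nat) (C - sum_n c K).
Proof.
  intro Hc. apply (is_series_incr_n c (S K)); [lia|].
  change (pred (S K)) with K.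
  match goal with |- is_series _ ?v => replace v with C; [exact Hc|] end.
  change (plus ?x ?y) with (x + y).
  (* [is_series_incr_n] sums over the monoid of the normed module [R]; align it with [c]'s. *)
  change (@sum_n (NormedModule.AbelianMonoid _ R_NormedModule) c K)
    with (@sum_n R_AbelianMonoid c K).
  ring.
Qed.

Lemma INR_succ_pos n : 0 < INR (n + 1).
Proof. rewrite plus_INR. pose proof (pos_INR n). simpl. lra. Qed.

Lemma is_lim_seq_inv_INR_succ : is_lim_seq (fun n => / INR (n + 1)) 0.
Proof.
  apply (is_lim_seq_ext (fun n => / INR (S n))); [intro n; now rewrite Nat.add_1_r|].
  apply -> (is_lim_seq_incr_1 (fun n => / INR n)).
  replace (Finite 0) with (Rbar_inv p_infty) by reflexivity.
  apply is_lim_seq_inv; [apply is_lim_seq_INR | discriminate].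
Qed.

Lemma is_lim_seq_pow_div_INR_succ (q : R) (m : nat -> nat) :
  0 <= q <= 1 -> (forall K, (K <= m K)%nat) -> is_lim_seq (fun K => q ^ m K / INR (S (m K))) 0.
Proof.
  intros Hq Hm.
  apply (is_lim_seq_le_le (fun _ => 0) _ (fun K => / INR (K + 1))).
  - intro K. assert (HK := INR_succ_pos K).
    assert (HmK : INR (K + 1) <= INR (S (m K))) by (apply le_INR; specialize (Hm K); lia).
    assert (Hpow : 0 <= q ^ m K <= 1)
      by (split; [apply pow_le; lra | rewrite <- (pow1 (m K)); apply pow_incr; lra]).
    split.
    + apply Rdiv_le_0_compat; lra.
    + unfold Rdiv. apply Rle_trans with (1 * / INR (S (m K))).
      * apply Rmult_le_compat_r; [left; apply Rinv_0_lt_compat|]; lra.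
      * rewrite Rmult_1_l. apply Rinv_le_contravar; lra.
  - apply is_lim_seq_const.
  - apply is_lim_seq_inv_INR_succ.
Qed.

Lemma ex_series_inv_pow s : (2 <= s)%nat -> ex_series (fun n => / INR (n + 1) ^ s).
Proof.
  intro Hs.
  apply (ex_series_le (K := R_AbsRing) (V := R_CompleteNormedModule) _
           (fun n => 2 * (/ INR (n + 1) - / INR (S n + 1)))).
  - intro n. change (norm ?y) with (Rabs y).
    assert (Hn := INR_succ_pos n).
    replace (INR (S n + 1)) with (INR (n + 1) + 1) by (rewrite <- S_INR; f_equal; lia).
    rewrite Rabs_pos_eq by (left; apply Rinv_0_lt_compat, pow_lt; lra).
    apply Rle_trans with (/ INR (n + 1) ^ 2).
    + apply Rinv_le_contravar; [apply pow_lt; lra|].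
      apply Rle_pow; [rewrite plus_INR; pose proof (pos_INR n); simpl; lra | exact Hs].
    + set (m := INR (n + 1)) in *.
      assert (Hm1 : 1 <= m) by (unfold m; rewrite plus_INR; pose proof (pos_INR n); simpl; lra).
      replace (2 * (/ m - / (m + 1))) with (/ (m * (m + 1) / 2)) by (field; lra).
      apply Rinv_le_contravar; [|simpl]; nra.
  - exists 2.
    pose proof (is_series_scal_r 2 _ _
      (is_series_telescope (fun n => / INR (n + 1)) 0 is_lim_seq_inv_INR_succ)) as H.
    cbv beta in H. replace ((/ INR (0 + 1) - 0) * 2) with 2 in H by (simpl; field).
    revert H. apply is_series_ext_R. intro n. ring.
Qed.

Lemma is_series_zeta s : (2 <= s)%nat -> is_series (fun n => / INR (n + 1) ^ s) (zeta s).
Proof. intro Hs. unfold zeta. apply Series_correct, ex_series_inv_pow, Hs. Qed.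

Lemma inv_pow_INR_succ_nonneg s n : 0 <= / INR (n + 1) ^ s.
Proof. left. apply Rinv_0_lt_compat, pow_lt, INR_succ_pos. Qed.

Lemma zeta_bounds s : (2 <= s)%nat -> 0 <= zeta s <= zeta 2.
Proof.
  intro Hs. split.
  - apply Rle_trans with (sum_n (fun n => / INR (n + 1) ^ s) 0).
    + rewrite sum_O. apply inv_pow_INR_succ_nonneg.
    + apply is_series_nonneg_sum_n_le;
        [intro n; apply inv_pow_INR_succ_nonneg | now apply is_series_zeta].
  - apply Series_le; [intro n; split|apply ex_series_inv_pow; lia].
    + apply inv_pow_INR_succ_nonneg.
    + assert (Hn := INR_succ_pos n).
      apply Rinv_le_contravar; [apply pow_lt; lra|].
      apply Rle_pow; [rewrite plus_INR; pose proof (pos_INR n); simpl; lra | exact Hs].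
Qed.

Lemma ex_series_bounded_div_pow (u : nat -> R) s :
  (2 <= s)%nat -> (forall n, Rabs (u n) <= 1) -> ex_series (fun n => u n / INR (n + 1) ^ s).
Proof.
  intros Hs Hu.
  apply (ex_series_le (K := R_AbsRing) (V := R_CompleteNormedModule) _
           (fun n => / INR (n + 1) ^ s));
    [|now apply ex_series_inv_pow].
  intro n. change (norm ?y) with (Rabs y). unfold Rdiv.
  rewrite Rabs_mult, (Rabs_pos_eq (/ _)) by apply inv_pow_INR_succ_nonneg.
  pose proof (inv_pow_INR_succ_nonneg s n). pose proof (Hu n). pose proof (Rabs_pos (u n)). nra.
Qed.

Lemma is_series_Cl2 x : is_series (fun n => sin (INR (n + 1) * x) / INR (n + 1) ^ 2) (Cl2 x).
Proof.
  unfold Cl2. apply Series_correct, ex_series_bounded_div_pow; [lia|].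
  intro n. apply Rabs_le, SIN_bound.
Qed.

Lemma is_series_Cl3 x : is_series (fun n => cos (INR (n + 1) * x) / INR (n + 1) ^ 3) (Cl3 x).
Proof.
  unfold Cl3. apply Series_correct, ex_series_bounded_div_pow; [lia|].
  intro n. apply Rabs_le, COS_bound.
Qed.

Lemma Cl2_opp y : Cl2 (- y) = - Cl2 y.
Proof.
  unfold Cl2. rewrite <- Series_opp. apply Series_ext. intro n.
  replace (INR (n + 1) * - y) with (- (INR (n + 1) * y)) by ring.
  rewrite sin_neg. unfold Rdiv. ring.
Qed.

Lemma Cl3_opp y : Cl3 (- y) = Cl3 y.
Proof.
  unfold Cl3. apply Series_ext. intro n.
  replace (INR (n + 1) * - y) with (- (INR (n + 1) * y)) by ring.
  now rewrite cos_neg.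
Qed.

Lemma Cl3_abs y : Cl3 (Rabs y) = Cl3 y.
Proof.
  destruct (Rle_or_lt 0 y) as [Hy|Hy].
  - now rewrite Rabs_pos_eq.
  - now rewrite Rabs_left, Cl3_opp.
Qed.

Lemma Cl2_abs_div y : Cl2 (Rabs y) / Rabs y = Cl2 y / y.
Proof.
  destruct (Rle_or_lt 0 y) as [Hy|Hy].
  - now rewrite Rabs_pos_eq.
  - rewrite Rabs_left, Cl2_opp by exact Hy. unfold Rdiv. rewrite Rinv_opp. ring.
Qed.

Lemma continuity_pt_ex_derive (f : R -> R) t : ex_derive f t -> continuity_pt f t.
Proof. intro H. apply continuity_pt_filterlim, (ex_derive_continuous f), H. Qed.

Lemma ex_RInt_continuity_pt (f : R -> R) a b :
  (forall t, Rmin a b <= t <= Rmax a b -> continuity_pt f t) -> ex_RInt f a b.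
Proof.
  intro H. apply (ex_RInt_continuous (V := R_CompleteNormedModule)).
  intros t Ht. apply continuity_pt_filterlim, H, Ht.
Qed.

Lemma ex_RInt_continuity_on (f : R -> R) a b u v :
  (forall t, a <= t <= b -> continuity_pt f t) -> a <= u <= b -> a <= v <= b -> ex_RInt f u v.
Proof.
  intros Hf Hu Hv. apply ex_RInt_continuity_pt. intros t [Ht1 Ht2]. apply Hf. split.
  - apply Rle_trans with (Rmin u v); [apply Rmin_glb|]; tauto.
  - apply Rle_trans with (Rmax u v); [|apply Rmax_lub]; tauto.
Qed.

Lemma continuity_pt_shift (f : R -> R) d s :
  continuity_pt f (s + d) -> continuity_pt (fun t => f (t + d)) s.
Proof.
  intro Hf. apply continuity_pt_comp with (f1 := fun t => t + d); [|exact Hf].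
  apply continuity_pt_ex_derive. auto_derive. auto.
Qed.

Lemma is_RInt_primitive (F f : R -> R) a b v :
  (forall t, is_derive F t (f t)) -> (forall t, continuity_pt f t) ->
  F b - F a = v -> is_RInt f a b v.
Proof.
  intros HF Hf <-. apply (is_RInt_derive F f); intros t _.
  - apply HF.
  - apply continuity_pt_filterlim, Hf.
Qed.

Lemma is_RInt_ext_open (f g : R -> R) a b l :
  a <= b -> (forall t, a < t < b -> f t = g t) -> is_RInt f a b l -> is_RInt g a b l.
Proof.
  intros Hab Hfg. apply is_RInt_ext. intros t Ht.
  rewrite Rmin_left, Rmax_right in Ht by exact Hab. now apply Hfg.
Qed.

Lemma RInt_ext_open (f g : R -> R) a b :
  a <= b -> (forall t, a < t < b -> f t = g t) -> RInt f a b = RInt g a b.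
Proof.
  intros Hab Hfg. apply RInt_ext. intros t Ht.
  rewrite Rmin_left, Rmax_right in Ht by exact Hab. now apply Hfg.
Qed.

Lemma is_RInt_sum_n (f : nat -> R -> R) (I : nat -> R) a b N :
  (forall n, is_RInt (f n) a b (I n)) ->
  is_RInt (fun t => sum_n (fun n => f n t) N) a b (sum_n I N).
Proof.
  intro Hf. induction N as [|N IH].
  - rewrite sum_O. refine (is_RInt_ext _ _ _ _ _ _ (Hf O)). intros t _. now rewrite sum_O.
  - rewrite sum_n_succ.
    refine (is_RInt_ext _ _ _ _ _ _ (is_RInt_plus _ _ _ _ _ _ IH (Hf (S N)))).
    intros t _. now rewrite sum_Sn.
Qed.

Lemma is_RInt_pow_div x s n : s <> 0 ->
  is_RInt (fun t => (t / s) ^ n) 0 x (x * (x / s) ^ n / INR (S n)).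
Proof.
  intro Hs. assert (Hn := INR_succ_pos n). rewrite Nat.add_1_r in Hn.
  replace (x * (x / s) ^ n / INR (S n))
    with (/ s ^ n * (x ^ S n / INR (S n) - 0 ^ S n / INR (S n))).
  - refine (is_RInt_ext _ _ _ _ _ _ (is_RInt_scal _ _ _ (/ s ^ n) _ (is_RInt_pow 0 x n))).
    intros t _. change (scal ?a ?b) with (a * b). unfold Rdiv.
    now rewrite Rpow_mult_distr, pow_inv, Rmult_comm.
  - rewrite (pow_i (S n)) by lia. unfold Rdiv. rewrite Rpow_mult_distr, pow_inv. simpl pow.
    field. split; [lra | apply pow_nonzero, Hs].
Qed.

Lemma is_RInt_sub_mul_pow_div x s n : s <> 0 ->
  is_RInt (fun t => (x - t) * (t / s) ^ n) 0 x
    (x ^ 2 * (x / s) ^ n / (INR (S n) * INR (S (S n)))).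
Proof.
  intro Hs.
  assert (Hn1 := INR_succ_pos n). assert (Hn2 := INR_succ_pos (S n)).
  rewrite Nat.add_1_r in Hn1, Hn2.
  replace (x ^ 2 * (x / s) ^ n / (INR (S n) * INR (S (S n))))
    with (x * (x * (x / s) ^ n / INR (S n)) - s * (x * (x / s) ^ S n / INR (S (S n)))).
  - refine (is_RInt_ext _ _ _ _ _ _ (is_RInt_minus _ _ _ _ _ _
              (is_RInt_scal _ _ _ x _ (is_RInt_pow_div x s n Hs))
              (is_RInt_scal _ _ _ s _ (is_RInt_pow_div x s (S n) Hs)))).
    assert (E : forall t, x * (t / s) ^ n - s * (t / s) ^ S n = (x - t) * (t / s) ^ n)
      by (intro t; simpl pow; field; exact Hs).
    intros t _. apply E.
  - simpl pow. rewrite (S_INR (S n)) in *. field. repeat split; try exact Hs; lra.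
Qed.

Lemma is_lim_seq_RInt_dominated (f : R -> R) (g h : nat -> R -> R) a b (I : R) (J L : nat -> R) :
  a <= b -> is_RInt f a b I -> (forall K, is_RInt (g K) a b (J K)) ->
  (forall K, is_RInt (h K) a b (L K)) ->
  (forall K t, a < t < b -> Rabs (f t - g K t) <= h K t) ->
  is_lim_seq L 0 -> is_lim_seq J I.
Proof.
  intros Hab Hf Hg Hh Hbound HL.
  assert (Hdiff : forall K, - L K <= I - J K <= L K).
  { intro K. assert (Hfg := is_RInt_minus _ _ _ _ _ _ Hf (Hg K)). split.
    - refine (is_RInt_le _ _ a b _ _ Hab (is_RInt_opp _ _ _ _ (Hh K)) Hfg _).
      intros t Ht. specialize (Hbound K t Ht).
      change (opp ?y) with (- y). change (minus ?y ?z) with (y - z).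
      apply Rabs_le_between in Hbound. lra.
    - refine (is_RInt_le _ _ a b _ _ Hab Hfg (Hh K) _).
      intros t Ht. specialize (Hbound K t Ht).
      change (minus ?y ?z) with (y - z). apply Rabs_le_between in Hbound. lra. }
  apply (is_lim_seq_le_le (fun K => I - L K) _ (fun K => I + L K)).
  - intro K. specialize (Hdiff K). lra.
  - replace (Finite I) with (Rbar_minus I 0) by (simpl; f_equal; ring).
    exact (is_lim_seq_minus' _ _ _ _ (is_lim_seq_const I) HL).
  - replace (Finite I) with (Rbar_plus I 0) by (simpl; f_equal; ring).
    exact (is_lim_seq_plus' _ _ _ _ (is_lim_seq_const I) HL).
Qed.

(** * The Riemann-Lebesgue lemma *)

Lemma RInt_double_by_shift (f : R -> R) a b d :
  0 < d < b - a -> (forall t, a <= t <= b -> continuity_pt f t) ->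
  2 * RInt f a b
  = RInt f a (a + d) + RInt f (b - d) b + RInt (fun s => f s + f (s + d)) a (b - d).
Proof.
  intros Hd Hf.
  assert (Hex : forall u v, a <= u <= b -> a <= v <= b -> ex_RInt f u v)
    by (intros u v; apply ex_RInt_continuity_on, Hf).
  assert (Hex_shift : ex_RInt (fun s => f (s + d)) a (b - d)).
  { apply (ex_RInt_continuity_on _ a (b - d)); [|lra|lra].
    intros s Hs. apply continuity_pt_shift, Hf. lra. }
  assert (Hshift : RInt (fun s => f (s + d)) a (b - d) = RInt f (a + d) b).
  { assert (Hlin : ex_RInt f (1 * a + d) (1 * (b - d) + d))
      by (apply Hex; lra).
    replace (RInt f (a + d) b) with (RInt f (1 * a + d) (1 * (b - d) + d)) by (f_equal; ring).
    rewrite <- (RInt_comp_lin f 1 d a (b - d) Hlin).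
    apply RInt_ext. intros s _. change (scal 1 ?y) with (1 * y).
    now rewrite Rmult_1_l, Rmult_1_l. }
  assert (Hsum : RInt (fun s => f s + f (s + d)) a (b - d)
                 = RInt f a (b - d) + RInt (fun s => f (s + d)) a (b - d))
    by (apply (RInt_plus f (fun s => f (s + d))); [apply Hex; lra | exact Hex_shift]).
  assert (Hleft : RInt f a (a + d) + RInt f (a + d) b = RInt f a b)
    by (apply (RInt_Chasles f); apply Hex; lra).
  assert (Hright : RInt f a (b - d) + RInt f (b - d) b = RInt f a b)
    by (apply (RInt_Chasles f); apply Hex; lra).
  rewrite Hsum, Hshift. lra.
Qed.

Lemma RInt_cos_bound (phi : R -> R) a b c M B eta :
  0 < M -> PI / M < b - a -> (forall t, a <= t <= b -> continuity_pt phi t) ->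
  (forall t, a <= t <= b -> Rabs (phi t) <= B) ->
  (forall s, a <= s <= b - PI / M -> Rabs (phi s - phi (s + PI / M)) <= eta) ->
  Rabs (RInt (fun t => phi t * cos (M * t + c)) a b) <= PI / M * B + (b - a) * eta / 2.
Proof.
  intros HM Hd Hphi HB Heta.
  set (d := PI / M) in *. set (f := fun t => phi t * cos (M * t + c)).
  assert (Hd0 : 0 < d) by (apply Rdiv_lt_0_compat; [apply PI_RGT_0 | exact HM]).
  assert (Hf : forall t, a <= t <= b -> continuity_pt f t).
  { intros t Ht. apply continuity_pt_mult; [now apply Hphi|].
    apply continuity_pt_ex_derive. auto_derive. auto. }
  assert (Hf_bound : forall t, a <= t <= b -> Rabs (f t) <= B).
  { intros t Ht. unfold f. rewrite Rabs_mult. rewrite <- (Rmult_1_r B).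
    apply Rmult_le_compat; [apply Rabs_pos | apply Rabs_pos | now apply HB |].
    apply Rabs_le, COS_bound. }
  (* [cos] changes sign over a half period, so [f s + f (s + d)] only sees the
     oscillation of [phi]. *)
  assert (Hpair : forall s, f s + f (s + d) = (phi s - phi (s + d)) * cos (M * s + c)).
  { intro s. unfold f.
    replace (M * (s + d) + c) with (M * s + c + PI) by (unfold d; field; lra).
    rewrite neg_cos. ring. }
  assert (Hend : forall u, a <= u -> u + d <= b -> Rabs (RInt f u (u + d)) <= d * B).
  { intros u Hu Hud. replace (d * B) with ((u + d - u) * B) by ring.
    apply abs_RInt_le_const; [lra | apply (ex_RInt_continuity_on f a b); auto; lra |].
    intros t Ht. apply Hf_bound. lra. }
  assert (Hmid : Rabs (RInt (fun s => f s + f (s + d)) a (b - d)) <= (b - d - a) * eta).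
  { apply abs_RInt_le_const; [lra| |].
    - apply (ex_RInt_plus f (fun s => f (s + d))).
      + apply (ex_RInt_continuity_on f a b); auto; lra.
      + apply (ex_RInt_continuity_on _ a (b - d)); [|lra|lra].
        intros s Hs. apply continuity_pt_shift, Hf. lra.
    - intros s Hs. rewrite Hpair, Rabs_mult, <- (Rmult_1_r eta).
      apply Rmult_le_compat; [apply Rabs_pos | apply Rabs_pos | now apply Heta |].
      apply Rabs_le, COS_bound. }
  assert (Heta0 : 0 <= eta) by (apply Rle_trans with (Rabs (phi a - phi (a + d)));
    [apply Rabs_pos | apply Heta; lra]).
  assert (Hdouble := RInt_double_by_shift f a b d (conj Hd0 Hd) Hf).
  assert (Habs : Rabs (2 * RInt f a b) <= d * B + d * B + (b - d - a) * eta).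
  { rewrite Hdouble. eapply Rle_trans; [apply Rabs_triang|].
    eapply Rle_trans; [apply Rplus_le_compat_r, Rabs_triang|].
    assert (Hend1 := Hend a ltac:(lra) ltac:(lra)).
    assert (Hend2 := Hend (b - d) ltac:(lra) ltac:(lra)).
    replace (b - d + d) with b in Hend2 by ring.
    lra. }
  rewrite Rabs_mult, Rabs_pos_eq in Habs by lra.
  assert ((b - d - a) * eta <= (b - a) * eta) by (apply Rmult_le_compat_r; lra).
  lra.
Qed.

Definition riemann_lebesgue (f : R -> R) (a b : R) : Prop :=
  forall c, (forall M, ex_RInt (fun t => f t * cos (M * t + c)) a b) /\
    is_lim (fun M => RInt (fun t => f t * cos (M * t + c)) a b) p_infty 0.

Lemma RInt_cos_small (phi : R -> R) a b c B delta eps M :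
  a < b -> (forall t, a <= t <= b -> continuity_pt phi t) ->
  (forall t, a <= t <= b -> Rabs (phi t) <= B) -> 0 < delta -> 0 < eps ->
  (forall s t, a <= s <= b -> a <= t <= b -> Rabs (s - t) < delta ->
     Rabs (phi s - phi t) < eps / (b - a)) ->
  PI / Rmin delta (b - a) + 2 * PI * B / eps < M ->
  Rabs (RInt (fun t => phi t * cos (M * t + c)) a b) < eps.
Proof.
  intros Hab Hphi HB Hdelta Heps Hunif HM. pose proof PI_RGT_0 as HPI.
  set (m := Rmin delta (b - a)) in *.
  assert (Hm : 0 < m) by (unfold m; apply Rmin_glb_lt; lra).
  assert (HB0 : 0 <= B) by (apply Rle_trans with (Rabs (phi a)); [apply Rabs_pos | apply HB; lra]).
  assert (HPm : 0 < PI / m) by (apply Rdiv_lt_0_compat; lra).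
  assert (HBe : 0 <= 2 * PI * B / eps) by (apply Rdiv_le_0_compat; nra).
  assert (HM0 : 0 < M) by lra.
  assert (Hd0 : 0 < PI / M) by (apply Rdiv_lt_0_compat; lra).
  assert (Hd : PI / M < m).
  { apply (Rmult_lt_reg_r M); [lra|]. replace (PI / M * M) with (m * (PI / m)) by (field; lra).
    apply Rmult_lt_compat_l; lra. }
  assert (HdB : PI / M * B < eps / 2).
  { replace (PI / M * B) with (2 * PI * B / eps * (eps / (2 * M))) by (field; lra).
    replace (eps / 2) with (M * (eps / (2 * M))) by (field; lra).
    apply Rmult_lt_compat_r; [apply Rdiv_lt_0_compat|]; lra. }
  eapply Rle_lt_trans.
  - apply (RInt_cos_bound phi a b c M B (eps / (b - a))); [exact HM0 | | exact Hphi | exact HB |].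
    + apply Rlt_le_trans with m; [exact Hd | apply Rmin_r].
    + intros s Hs. left. apply Hunif; [lra | lra |].
      replace (s - (s + PI / M)) with (- (PI / M)) by ring.
      rewrite Rabs_Ropp, Rabs_pos_eq by lra.
      apply Rlt_le_trans with m; [exact Hd | apply Rmin_l].
  - replace ((b - a) * (eps / (b - a)) / 2) with (eps / 2) by (field; lra). lra.
Qed.

Lemma riemann_lebesgue_continuous (phi : R -> R) a b :
  a < b -> (forall t, a <= t <= b -> continuity_pt phi t) -> riemann_lebesgue phi a b.
Proof.
  intros Hab Hphi c. split.
  - intro M. apply (ex_RInt_continuity_on _ a b); [|lra|lra].
    intros t Ht. apply continuity_pt_mult; [now apply Hphi|].
    apply continuity_pt_ex_derive. auto_derive. auto.
  - apply is_lim_spec. intro eps.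
    destruct (continuity_ab_maj (fun t => Rabs (phi t)) a b) as [tmax [Hmax _]]; [lra| |].
    { intros t Ht. apply continuity_pt_comp with (f1 := phi) (f2 := Rabs);
        [now apply Hphi | apply Rcontinuity_abs]. }
    assert (Heta : 0 < eps / (b - a)) by (apply Rdiv_lt_0_compat; [apply cond_pos | lra]).
    destruct (Heine_cor2 Hphi (mkposreal _ Heta)) as [delta Hdelta].
    exists (PI / Rmin delta (b - a) + 2 * PI * Rabs (phi tmax) / eps). intros M HM.
    rewrite Rminus_0_r.
    exact (RInt_cos_small phi a b c _ delta eps M Hab Hphi Hmax (cond_pos delta) (cond_pos eps)
             Hdelta HM).
Qed.

Lemma riemann_lebesgue_ext (f g : R -> R) a b :
  a <= b -> (forall t, a < t < b -> f t = g t) -> riemann_lebesgue g a b -> riemann_lebesgue f a b.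
Proof.
  intros Hab Hfg Hg c. destruct (Hg c) as [Hex Hlim].
  assert (Hpt : forall M t, Rmin a b < t < Rmax a b ->
                  g t * cos (M * t + c) = f t * cos (M * t + c)).
  { intros M t Ht. rewrite Rmin_left, Rmax_right in Ht by lra. now rewrite Hfg. }
  split.
  - intro M. exact (ex_RInt_ext _ _ a b (Hpt M) (Hex M)).
  - refine (is_lim_ext _ _ _ _ _ Hlim). intro M. exact (RInt_ext _ _ a b (Hpt M)).
Qed.

Lemma riemann_lebesgue_Chasles (f : R -> R) a m b :
  riemann_lebesgue f a m -> riemann_lebesgue f m b -> riemann_lebesgue f a b.
Proof.
  intros H1 H2 c. destruct (H1 c) as [Hex1 Hlim1], (H2 c) as [Hex2 Hlim2]. split.
  - intro M. exact (ex_RInt_Chasles _ a m b (Hex1 M) (Hex2 M)).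
  - replace (Finite 0) with (Finite (0 + 0)) by (f_equal; ring).
    refine (is_lim_ext _ _ _ _ _ (is_lim_plus' _ _ _ _ _ Hlim1 Hlim2)).
    intro M. exact (RInt_Chasles _ a m b (Hex1 M) (Hex2 M)).
Qed.

Lemma two_sin_half_mul_cos t m c :
  2 * sin (t / 2) * cos (m * t + c)
  = cos ((m - /2) * t + (c + PI / 2)) - cos ((m + /2) * t + (c + PI / 2)).
Proof.
  replace ((m - /2) * t + (c + PI / 2)) with (m * t + c + - (t / 2) + PI / 2) by field.
  replace ((m + /2) * t + (c + PI / 2)) with (m * t + c + t / 2 + PI / 2) by field.
  set (u := m * t + c).
  rewrite !cos_plus, !sin_plus, cos_PI2, sin_PI2, cos_neg, sin_neg. ring.
Qed.

Lemma is_series_RInt_sin_half (f : R -> R) a b c :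
  riemann_lebesgue f a b ->
  is_series (fun n => RInt (fun t => 2 * sin (t / 2) * f t * cos (INR (n + 1) * t + c)) a b)
    (RInt (fun t => f t * cos (/2 * t + (c + PI / 2))) a b).
Proof.
  intro Hf. destruct (Hf (c + PI / 2)) as [Hex Hlim].
  set (u n := RInt (fun t => f t * cos ((INR n + /2) * t + (c + PI / 2))) a b).
  assert (Hu : is_lim_seq u 0).
  { refine (is_lim_comp_seq _ (fun n => INR n + /2) p_infty 0 Hlim _ _).
    - exists O. intros n _. discriminate.
    - apply (is_lim_seq_plus _ _ p_infty (/2) p_infty is_lim_seq_INR (is_lim_seq_const _)).
      reflexivity. }
  replace (RInt (fun t => f t * cos (/2 * t + (c + PI / 2))) a b) with (u O - 0)
    by (unfold u; simpl INR; now rewrite Rplus_0_l, Rminus_0_r).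
  refine (is_series_ext _ _ _ _ (is_series_telescope u 0 Hu)).
  intro n. unfold u.
  rewrite <- (RInt_minus (V := R_CompleteNormedModule)) by apply Hex.
  apply RInt_ext. intros t _. change (minus ?x ?y) with (x - y).
  replace (2 * sin (t / 2) * f t * cos (INR (n + 1) * t + c))
    with (f t * (2 * sin (t / 2) * cos (INR (n + 1) * t + c))) by ring.
  rewrite (two_sin_half_mul_cos t (INR (n + 1)) c).
  replace (INR (n + 1) - /2) with (INR n + /2) by (rewrite plus_INR; simpl; field).
  replace (INR (n + 1) + /2) with (INR (S n) + /2) by (rewrite S_INR, plus_INR; simpl; field).
  match goal with |- ?x = ?y => change (@eq R x y) end. ring.
Qed.

(** * Partial fractions of the cotangent *)

Definition diff_quot (g : R -> R) (l t : R) : R := if Req_EM_T t 0 then l else (g t - g 0) / t.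

Lemma diff_quot_spec g l t : t * diff_quot g l t = g t - g 0.
Proof. unfold diff_quot. destruct (Req_EM_T t 0) as [->|Ht]; [ring | field; exact Ht]. Qed.

Lemma continuity_pt_diff_quot_0 g l : derivable_pt_lim g 0 l -> continuity_pt (diff_quot g l) 0.
Proof.
  intros Hg eps Heps. destruct (Hg eps Heps) as [delta Hdelta].
  exists delta. split; [apply cond_pos|].
  intros t [[_ Ht0] Ht]. simpl in *. unfold R_dist in *. rewrite Rminus_0_r in Ht.
  unfold diff_quot. destruct (Req_EM_T 0 0) as [_|]; [|congruence].
  destruct (Req_EM_T t 0) as [->|_]; [congruence|].
  specialize (Hdelta t (not_eq_sym Ht0) Ht). now rewrite Rplus_0_l in Hdelta.
Qed.

Lemma continuity_pt_diff_quot g l t :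
  t <> 0 -> continuity_pt g t -> continuity_pt (diff_quot g l) t.
Proof.
  intros Ht Hg. apply continuity_pt_filterlim.
  apply (continuous_ext_loc _ (fun y => (g y - g 0) / y)).
  - exists (mkposreal (Rabs t) (Rabs_pos_lt _ Ht)). intros y Hy.
    unfold diff_quot. destruct (Req_EM_T y 0) as [->|_]; [|reflexivity].
    exfalso. change (Rabs (0 - t) < Rabs t) in Hy. rewrite Rminus_0_l, Rabs_Ropp in Hy. lra.
  - apply continuity_pt_filterlim. unfold diff_quot. destruct (Req_EM_T t 0); [congruence|].
    apply continuity_pt_div; [| apply continuity_pt_id | exact Ht].
    apply continuity_pt_minus; [exact Hg | apply continuity_pt_const; intros u v; reflexivity].
Qed.

Definition sinc : R -> R := diff_quot sin 1.

Lemma sinc_spec t : t * sinc t = sin t.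
Proof. unfold sinc. now rewrite diff_quot_spec, sin_0, Rminus_0_r. Qed.

Lemma continuity_sinc t : continuity_pt sinc t.
Proof.
  destruct (Req_EM_T t 0) as [->|Ht].
  - apply continuity_pt_diff_quot_0. rewrite <- cos_0. apply derivable_pt_lim_sin.
  - apply continuity_pt_diff_quot; [exact Ht | apply continuity_sin].
Qed.

Lemma sinc_pos t : 0 <= t < PI -> 0 < sinc t.
Proof.
  intro Ht. destruct (Req_EM_T t 0) as [->|Ht0].
  - unfold sinc, diff_quot. destruct (Req_EM_T 0 0); [lra | congruence].
  - pose proof (sinc_spec t). pose proof (sin_gt_0 t ltac:(lra) ltac:(lra)). nra.
Qed.

Lemma two_sin_half t : 2 * sin (t / 2) = t * sinc (t / 2).
Proof. rewrite <- (sinc_spec (t / 2)). field. Qed.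

Lemma continuity_pt_div_sinc (f h : R -> R) t :
  continuity_pt f t -> continuity_pt h t -> 0 <= h t < PI ->
  continuity_pt (fun t => f t / sinc (h t)) t.
Proof.
  intros Hf Hh Ht. apply continuity_pt_div; [exact Hf| |].
  - apply continuity_pt_comp with (f1 := h) (f2 := sinc); [exact Hh | apply continuity_sinc].
  - apply Rgt_not_eq, sinc_pos, Ht.
Qed.

Lemma sin_INR_mul_PI n : sin (INR n * PI) = 0.
Proof. apply sin_eq_0_1. exists (Z.of_nat n). now rewrite <- INR_IZR_INZ. Qed.

Lemma riemann_lebesgue_diff_quot_div_sinc g l b :
  0 < b < 2 * PI -> derivable_pt_lim g 0 l -> (forall t, 0 <= t <= b -> continuity_pt g t) ->
  riemann_lebesgue (fun t => diff_quot g l t / sinc (t / 2)) 0 b.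
Proof.
  intros Hb Hg0 Hg. apply riemann_lebesgue_continuous; [lra|]. intros t Ht.
  apply (continuity_pt_div_sinc (diff_quot g l) (fun t => t / 2));
    [| apply continuity_pt_ex_derive; auto_derive; auto | lra].
  destruct (Req_EM_T t 0) as [->|Ht0].
  - now apply continuity_pt_diff_quot_0.
  - apply continuity_pt_diff_quot; [exact Ht0 | now apply Hg].
Qed.

Lemma is_RInt_cos_reflect_sub w : w <> 0 ->
  is_RInt (fun t => cos (w * (PI - t)) - cos (w * PI)) 0 PI (sin (w * PI) / w - PI * cos (w * PI)).
Proof.
  intro Hw.
  apply (is_RInt_primitive (fun t => - sin (w * (PI - t)) / w - cos (w * PI) * t)).
  - intro t. auto_derive; [auto|]. replace (PI + - t) with (PI - t) by ring. field. exact Hw.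
  - intro t. apply continuity_pt_ex_derive. auto_derive. auto.
  - rewrite Rminus_diag, Rminus_0_r, Rmult_0_r, sin_0. field. exact Hw.
Qed.

Lemma is_RInt_cos_reflect_mul_cos w m : w ^ 2 - m ^ 2 <> 0 -> m <> 0 -> sin (m * PI) = 0 ->
  is_RInt (fun t => (cos (w * (PI - t)) - cos (w * PI)) * cos (m * t)) 0 PI
    (w * sin (w * PI) / (w ^ 2 - m ^ 2)).
Proof.
  intros Hwm Hm Hsm.
  apply (is_RInt_primitive (fun t => - w / (w ^ 2 - m ^ 2) * sin (w * (PI - t)) * cos (m * t)
                                     - m / (w ^ 2 - m ^ 2) * cos (w * (PI - t)) * sin (m * t)
                                     - cos (w * PI) * sin (m * t) / m)).
  - intro t. auto_derive; [auto|].
    replace (w * (w * 1) - m * (m * 1)) with (w ^ 2 - m ^ 2) by ring.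
    replace (PI + - t) with (PI - t) by ring.
    field. split; assumption.
  - intro t. apply continuity_pt_ex_derive. auto_derive. auto.
  - rewrite Rminus_diag, Rminus_0_r, !Rmult_0_r, sin_0, cos_0, Hsm.
    field. split; assumption.
Qed.

Lemma is_series_cot_partial_fractions w : 0 < w < 1 ->
  is_series (fun n => 2 * w / (w ^ 2 - INR (n + 1) ^ 2))
    (PI * cos (PI * w) / sin (PI * w) - 1 / w).
Proof.
  intro Hw. pose proof PI_RGT_0 as HPI.
  set (g t := cos (w * (PI - t))).
  assert (Hg0 : g 0 = cos (w * PI)) by (unfold g; now rewrite Rminus_0_r).
  set (psi t := diff_quot g (w * sin (w * PI)) t / sinc (t / 2)).
  assert (Hpsi : forall t, 0 <= t <= PI -> 2 * sin (t / 2) * psi t = g t - cos (w * PI)).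
  { intros t Ht. unfold psi.
    rewrite two_sin_half, <- Hg0, <- (diff_quot_spec g (w * sin (w * PI)) t).
    field. apply Rgt_not_eq, sinc_pos. lra. }
  assert (Hrl : riemann_lebesgue psi 0 PI).
  { apply riemann_lebesgue_diff_quot_div_sinc; [lra | |].
    - apply is_derive_Reals. unfold g. auto_derive; [auto|]. rewrite Ropp_0, Rplus_0_r. ring.
    - intros t _. apply continuity_pt_ex_derive. unfold g. auto_derive. auto. }
  assert (Hterm : forall n,
    RInt (fun t => 2 * sin (t / 2) * psi t * cos (INR (n + 1) * t + 0)) 0 PI
    = w * sin (w * PI) / (w ^ 2 - INR (n + 1) ^ 2)).
  { intro n. assert (1 <= INR (n + 1)) by (rewrite plus_INR; pose proof (pos_INR n); simpl; lra).
    apply is_RInt_unique.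
    apply (is_RInt_ext_open (fun t => (g t - cos (w * PI)) * cos (INR (n + 1) * t))); [lra| |].
    - intros t Ht. now rewrite <- Hpsi, Rplus_0_r by lra.
    - apply is_RInt_cos_reflect_mul_cos; [apply Rlt_not_eq; nra | lra | apply sin_INR_mul_PI]. }
  assert (Hlim : RInt (fun t => psi t * cos (/2 * t + (0 + PI / 2))) 0 PI
                 = (PI * cos (PI * w) - sin (PI * w) / w) / 2).
  { apply is_RInt_unique.
    replace ((PI * cos (PI * w) - sin (PI * w) / w) / 2)
      with (- / 2 * (sin (w * PI) / w - PI * cos (w * PI)))
      by (rewrite (Rmult_comm PI w); field; lra).
    apply (is_RInt_ext_open (fun t => - / 2 * (g t - cos (w * PI)))); [lra| |].
    - intros t Ht. rewrite <- Hpsi by lra.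
      rewrite Rplus_0_l, cos_plus, cos_PI2, sin_PI2.
      replace (/2 * t) with (t / 2) by field. field.
    - exact (is_RInt_scal _ _ _ _ _ (is_RInt_cos_reflect_sub w ltac:(lra))). }
  pose proof (is_series_RInt_sin_half psi 0 PI 0 Hrl) as Hs.
  rewrite Hlim in Hs. apply (is_series_ext_R _ _ _ Hterm) in Hs.
  apply (is_series_scal_r (2 / sin (PI * w))) in Hs.
  assert (Hsin : 0 < sin (PI * w)) by (apply sin_gt_0; nra).
  replace (PI * cos (PI * w) / sin (PI * w) - 1 / w)
    with ((PI * cos (PI * w) - sin (PI * w) / w) / 2 * (2 / sin (PI * w))) by (field; lra).
  revert Hs. apply is_series_ext_R. intro n.
  assert (1 <= INR (n + 1)) by (rewrite plus_INR; pose proof (pos_INR n); simpl; lra).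
  rewrite (Rmult_comm w PI). field. split; [apply Rlt_not_eq; nra | lra].
Qed.

(** * The generating function of the even zeta values *)

Definition zeta_even_gen (w : R) : R := 1 / 2 - PI * w * cos (PI * w) / (2 * sin (PI * w)).

Lemma is_series_zeta_even w : 0 < w < 1 ->
  is_series (fun k => zeta (2 * (k + 1)) * w ^ (2 * (k + 1))) (zeta_even_gen w).
Proof.
  intro Hw.
  assert (Hm1 : forall n, 1 <= INR (n + 1))
    by (intro n; rewrite plus_INR; pose proof (pos_INR n); simpl; lra).
  set (a n k := (w ^ 2 / INR (n + 1) ^ 2) ^ (k + 1)).
  assert (Hratio : forall n, 0 <= w ^ 2 / INR (n + 1) ^ 2 < 1).
  { intro n. specialize (Hm1 n). split.
    - apply Rdiv_le_0_compat; [nra | apply pow_lt; lra].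
    - apply Rmult_lt_reg_r with (INR (n + 1) ^ 2); [apply pow_lt; lra|].
      unfold Rdiv. rewrite Rmult_assoc, Rinv_l by (apply pow_nonzero; lra). nra. }
  assert (Ha : forall n k, 0 <= a n k) by (intros n k; apply pow_le, Hratio).
  assert (Hrow : forall n, is_series (a n) (w ^ 2 / (INR (n + 1) ^ 2 - w ^ 2))).
  { intro n. specialize (Hm1 n).
    replace (w ^ 2 / (INR (n + 1) ^ 2 - w ^ 2))
      with ((w ^ 2 / INR (n + 1) ^ 2) / (1 - w ^ 2 / INR (n + 1) ^ 2))
      by (field; split; apply Rgt_not_eq; nra).
    apply is_series_geom_succ, Hratio. }
  assert (Hrows : is_series (fun n => w ^ 2 / (INR (n + 1) ^ 2 - w ^ 2)) (zeta_even_gen w)).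
  { pose proof (is_series_scal_r (- w / 2) _ _ (is_series_cot_partial_fractions w Hw)) as H.
    assert (Hsin : 0 < sin (PI * w)) by (apply sin_gt_0; pose proof PI_RGT_0; nra).
    unfold zeta_even_gen.
    replace (1 / 2 - PI * w * cos (PI * w) / (2 * sin (PI * w)))
      with ((PI * cos (PI * w) / sin (PI * w) - 1 / w) * (- w / 2)) by (field; lra).
    revert H. apply is_series_ext_R. intro n.
    assert (INR (n + 1) ^ 2 - w ^ 2 > 0) by (specialize (Hm1 n); nra).
    field. split; lra. }
  refine (is_series_ext_R _ _ _ _ (is_series_swap_nonneg a _ _ Ha Hrow Hrows)).
  intro k.
  rewrite (Series_ext _ (fun n => w ^ (2 * (k + 1)) * / INR (n + 1) ^ (2 * (k + 1)))).
  - rewrite Series_scal_l. unfold zeta. ring.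
  - intro n. unfold a, Rdiv. now rewrite Rpow_mult_distr, pow_inv, !pow_mult.
Qed.

Lemma zeta_even_tail_bound w K : 0 < w < 1 ->
  0 <= zeta_even_gen w - sum_n (fun k => zeta (2 * (k + 1)) * w ^ (2 * (k + 1))) K
    <= zeta 2 * w ^ (2 * K + 4) / (1 - w ^ 2).
Proof.
  intro Hw.
  set (c k := zeta (2 * (k + 1)) * w ^ (2 * (k + 1))).
  assert (Hc : forall k, 0 <= c k).
  { intro k. apply Rmult_le_pos; [apply zeta_bounds; lia | apply pow_le; lra]. }
  assert (Htail := is_series_tail c _ K (is_series_zeta_even w Hw)).
  split.
  - apply Rle_trans with (sum_n (fun k => c (S K + k)%nat) 0).
    + apply sum_n_nonneg. intro k. apply Hc.
    + apply is_series_nonneg_sum_n_le; [intro k; apply Hc | exact Htail].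
  - assert (Hgeom : is_series (fun k => (w ^ 2) ^ k * (zeta 2 * w ^ (2 * K + 4)))
                      (zeta 2 * w ^ (2 * K + 4) / (1 - w ^ 2))).
    { replace (zeta 2 * w ^ (2 * K + 4) / (1 - w ^ 2))
        with (/ (1 - w ^ 2) * (zeta 2 * w ^ (2 * K + 4))) by (field; nra).
      apply is_series_scal_r, is_series_geom. rewrite Rabs_pos_eq; nra. }
    refine (is_series_le _ _ _ _ _ Htail Hgeom). intro k. unfold c.
    replace (2 * (S K + k + 1))%nat with (2 * K + 4 + 2 * k)%nat by lia.
    rewrite pow_add, pow_mult.
    assert (0 <= w ^ (2 * K + 4)) by (apply pow_le; lra).
    assert (0 <= (w ^ 2) ^ k) by (apply pow_le; nra).
    assert (0 <= w ^ (2 * K + 4) * (w ^ 2) ^ k) by (apply Rmult_le_pos; assumption).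
    pose proof (zeta_bounds (2 * K + 4 + 2 * k) ltac:(lia)). nra.
Qed.

(** * The Clausen integral *)

Definition clausen_weight (x t : R) : R := (x - t) * t / (4 * sin (t / 2)).

Lemma riemann_lebesgue_clausen_weight x :
  0 < x <= 2 * PI -> riemann_lebesgue (clausen_weight x) 0 x.
Proof.
  intro Hx. pose proof PI_RGT_0 as HPI.
  assert (Hcont_left : forall y t, 0 <= t < 2 * PI ->
            continuity_pt (fun t => (y - t) / 2 / sinc (t / 2)) t).
  { intros y t Ht. apply continuity_pt_div_sinc; [| |lra];
      apply continuity_pt_ex_derive; auto_derive; auto. }
  assert (Hleft : forall t, 0 < t < 2 * PI -> clausen_weight x t = (x - t) / 2 / sinc (t / 2)).
  { intros t Ht. unfold clausen_weight.
    rewrite <- (Rmult_1_r (sin (t / 2))), <- (sinc_spec (t / 2)).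
    assert (0 < sinc (t / 2)) by (apply sinc_pos; lra).
    field. split; lra. }
  destruct (Rle_lt_or_eq_dec x (2 * PI) (proj2 Hx)) as [Hlt | ->].
  - apply (riemann_lebesgue_ext _ (fun t => (x - t) / 2 / sinc (t / 2)));
      [lra | intros t Ht; apply Hleft; lra |].
    apply riemann_lebesgue_continuous; [lra|]. intros t Ht. apply Hcont_left. lra.
  - (* At [x = 2 PI] the weight has a removable singularity at both ends of [0, 2 PI]. *)
    apply (riemann_lebesgue_Chasles _ 0 PI).
    + apply (riemann_lebesgue_ext _ (fun t => (2 * PI - t) / 2 / sinc (t / 2)));
        [lra | intros t Ht; apply Hleft; lra |].
      apply riemann_lebesgue_continuous; [lra|]. intros t Ht. apply Hcont_left. lra.
    + apply (riemann_lebesgue_ext _ (fun t => t / 2 / sinc (PI - t / 2))); [lra| |].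
      * intros t Ht. unfold clausen_weight.
        replace (sin (t / 2)) with ((PI - t / 2) * sinc (PI - t / 2))
          by (rewrite sinc_spec, <- sin_PI_x; f_equal; ring).
        assert (0 < sinc (PI - t / 2)) by (apply sinc_pos; lra).
        field. split; lra.
      * apply riemann_lebesgue_continuous; [lra|]. intros t Ht.
        apply continuity_pt_div_sinc; [| |lra]; apply continuity_pt_ex_derive; auto_derive; auto.
Qed.

Lemma is_RInt_poly_sin x m : m <> 0 ->
  is_RInt (fun t => (x - t) * (t / 2) * sin (m * t)) 0 x
    (- ((cos (m * x) - 1) / m ^ 3 + x / 2 * (sin (m * x) / m ^ 2))).
Proof.
  intro Hm.
  apply (is_RInt_primitive (fun t => (- (x * t - t ^ 2) * cos (m * t) / m
                                      + (x - 2 * t) * sin (m * t) / m ^ 2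
                                      - 2 * cos (m * t) / m ^ 3) / 2)).
  - intro t. auto_derive; [auto|]. field. exact Hm.
  - intro t. apply continuity_pt_ex_derive. auto_derive. auto.
  - rewrite !Rmult_0_r, sin_0, cos_0. field. exact Hm.
Qed.

Lemma is_series_clausen_combination x :
  is_series (fun n => (cos (INR (n + 1) * x) - 1) / INR (n + 1) ^ 3
                      + x / 2 * (sin (INR (n + 1) * x) / INR (n + 1) ^ 2))
    (Cl3 x - zeta 3 + x / 2 * Cl2 x).
Proof.
  refine (is_series_ext_R _ _ _ _ (is_series_plus _ _ _ _
            (is_series_minus _ _ _ _ (is_series_Cl3 x) (is_series_zeta 3 ltac:(lia)))
            (is_series_scal_l (x / 2) _ _ (is_series_Cl2 x)))).
  intro n. repeat change (plus ?a ?b) with (a + b). change (opp ?a) with (- a).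
  change (scal ?a ?b) with (a * b). unfold Rdiv. ring.
Qed.

Lemma RInt_clausen_weight_cos_half x : 0 < x <= 2 * PI ->
  RInt (fun t => clausen_weight x t * cos (t / 2)) 0 x = - (Cl3 x - zeta 3 + x / 2 * Cl2 x).
Proof.
  intro Hx. pose proof PI_RGT_0 as HPI.
  set (A := RInt (fun t => clausen_weight x t * cos (t / 2)) 0 x).
  assert (Hs := is_series_RInt_sin_half (clausen_weight x) 0 x (- (PI / 2))
                  (riemann_lebesgue_clausen_weight x Hx)).
  replace (RInt (fun t => clausen_weight x t * cos (/2 * t + (- (PI / 2) + PI / 2))) 0 x)
    with A in Hs by (apply RInt_ext; intros t _; do 2 f_equal; field).
  assert (Hneg : is_series (fun n => (cos (INR (n + 1) * x) - 1) / INR (n + 1) ^ 3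
                                      + x / 2 * (sin (INR (n + 1) * x) / INR (n + 1) ^ 2)) (- A)).
  { refine (is_series_ext_R _ _ _ _ (is_series_opp _ _ Hs)). intro n.
    change (opp ?y) with (- y). set (m := INR (n + 1)).
    assert (Hm : m <> 0) by apply Rgt_not_eq, INR_succ_pos.
    rewrite <- (Ropp_involutive (_ + _)), <- (is_RInt_unique _ _ _ _ (is_RInt_poly_sin x m Hm)).
    f_equal. apply RInt_ext_open; [lra|]. intros t Ht.
    assert (Hsin : 0 < sin (t / 2)) by (apply sin_gt_0; lra).
    replace (m * t + - (PI / 2)) with (- (PI / 2 - m * t)) by ring.
    rewrite cos_neg, cos_shift. unfold clausen_weight.
    field. lra. }
  assert (H1 := is_series_unique _ _ Hneg).
  assert (H2 := is_series_unique _ _ (is_series_clausen_combination x)).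
  lra.
Qed.

Lemma is_RInt_clausen x : 0 < x <= 2 * PI ->
  is_RInt (fun t => (x - t) * zeta_even_gen (t / (2 * PI))) 0 x
    (x ^ 2 / 4 + (Cl3 x - zeta 3 + x / 2 * Cl2 x)).
Proof.
  intro Hx. pose proof PI_RGT_0 as HPI.
  rewrite <- (Ropp_involutive (Cl3 x - _ + _)), <- (RInt_clausen_weight_cos_half x Hx).
  apply (is_RInt_ext_open (fun t => (x - t) / 2 - clausen_weight x t * cos (t / 2))); [lra| |].
  - intros t Ht. unfold zeta_even_gen, clausen_weight.
    assert (Hsin : 0 < sin (t / 2)) by (apply sin_gt_0; lra).
    replace (PI * (t / (2 * PI))) with (t / 2) by (field; lra).
    field. lra.
  - apply (is_RInt_minus (fun t => (x - t) / 2)).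
    + apply (is_RInt_primitive (fun t => (x * t - t ^ 2 / 2) / 2)).
      * intro t. auto_derive; [auto | field].
      * intro t. apply continuity_pt_ex_derive. auto_derive. auto.
      * field.
    + apply (RInt_correct (V := R_CompleteNormedModule)).
      destruct (riemann_lebesgue_clausen_weight x Hx 0) as [Hex _].
      apply (ex_RInt_ext (fun t => clausen_weight x t * cos (/2 * t + 0))); [|apply Hex].
      intros t _. do 2 f_equal. field.
Qed.

(** * Termwise integration *)

Lemma zeta_even_remainder_bound x t K : 0 < t < x -> x <= 2 * PI ->
  Rabs ((x - t) * zeta_even_gen (t / (2 * PI))
        - (x - t) * sum_n (fun k => zeta (2 * (k + 1)) * (t / (2 * PI)) ^ (2 * (k + 1))) K)
  <= 2 * PI * zeta 2 * (t / (2 * PI)) ^ (2 * K + 4).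
Proof.
  intros Ht Hx. pose proof PI_RGT_0 as HPI.
  assert (Hr : 0 < t / (2 * PI) < 1).
  { split; [apply Rdiv_lt_0_compat; lra|].
    apply (Rmult_lt_reg_r (2 * PI)); [lra|]. field_simplify; lra. }
  set (r := t / (2 * PI)) in *.
  assert (Htr : t = 2 * PI * r) by (unfold r; field; lra).
  assert (Hxt : 0 <= x - t <= 2 * PI * (1 - r)) by lra.
  destruct (zeta_even_tail_bound r K Hr) as [Htail0 Htail1].
  assert (Hz2 : 0 <= zeta 2) by (apply zeta_bounds; lia).
  assert (HrK : 0 <= r ^ (2 * K + 4)) by (apply pow_le; lra).
  rewrite <- Rmult_minus_distr_l, Rabs_mult, !Rabs_pos_eq by lra.
  (* [x - t <= 2 PI (1 - r)] cancels the pole of the tail bound at [r = 1]. *)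
  apply Rle_trans with (2 * PI * (1 - r) * (zeta 2 * r ^ (2 * K + 4) / (1 - r ^ 2))).
  - apply Rmult_le_compat; [apply Hxt | exact Htail0 | apply Hxt | exact Htail1].
  - replace (2 * PI * (1 - r) * (zeta 2 * r ^ (2 * K + 4) / (1 - r ^ 2)))
      with (2 * PI * zeta 2 * r ^ (2 * K + 4) / (1 + r))
      by (field; repeat split; apply Rgt_not_eq; nra).
    apply Rmult_le_reg_r with (1 + r); [lra|].
    unfold Rdiv. rewrite Rmult_assoc, Rinv_l by lra.
    assert (0 <= 2 * PI * zeta 2 * r ^ (2 * K + 4)) by (apply Rmult_le_pos; nra).
    nra.
Qed.

Lemma is_series_zeta_even_integral x : 0 < x <= 2 * PI ->
  is_series (fun k => zeta (2 * (k + 1)) * (x ^ 2 * (x / (2 * PI)) ^ (2 * (k + 1))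
                        / (INR (S (2 * (k + 1))) * INR (S (S (2 * (k + 1)))))))
    (x ^ 2 / 4 + (Cl3 x - zeta 3 + x / 2 * Cl2 x)).
Proof.
  intro Hx. pose proof PI_RGT_0 as HPI.
  assert (H2PI : 2 * PI <> 0) by lra.
  refine (is_lim_seq_RInt_dominated
            (fun t => (x - t) * zeta_even_gen (t / (2 * PI)))
            (fun K t => (x - t)
               * sum_n (fun k => zeta (2 * (k + 1)) * (t / (2 * PI)) ^ (2 * (k + 1))) K)
            (fun K t => 2 * PI * zeta 2 * (t / (2 * PI)) ^ (2 * K + 4)) 0 x _ _
            (fun K => 2 * PI * zeta 2 * (x * (x / (2 * PI)) ^ (2 * K + 4) / INR (S (2 * K + 4))))
            _ (is_RInt_clausen x Hx) _ _ _ _).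
  - lra.
  - intro K.
    refine (is_RInt_ext _ _ _ _ _ _ (is_RInt_sum_n
              (fun k t => (x - t) * (zeta (2 * (k + 1)) * (t / (2 * PI)) ^ (2 * (k + 1))))
              _ 0 x K _)).
    + intros t _. exact (sum_n_mult_l (K := R_Ring) (x - t) _ K).
    + intro k.
      apply (is_RInt_ext_open
               (fun t => zeta (2 * (k + 1)) * ((x - t) * (t / (2 * PI)) ^ (2 * (k + 1)))));
        [lra | intros t _; ring |].
      exact (is_RInt_scal _ _ _ _ _ (is_RInt_sub_mul_pow_div x _ _ H2PI)).
  - intro K. exact (is_RInt_scal _ _ _ _ _ (is_RInt_pow_div x _ _ H2PI)).
  - intros K t Ht. apply zeta_even_remainder_bound; lra.
  - replace (Finite 0) with (Rbar_mult (2 * PI * zeta 2 * x) 0) by (simpl; f_equal; ring).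
    apply (is_lim_seq_ext
             (fun K => 2 * PI * zeta 2 * x * ((x / (2 * PI)) ^ (2 * K + 4) / INR (S (2 * K + 4))))).
    { intro K. unfold Rdiv. ring. }
    apply is_lim_seq_scal_l, is_lim_seq_pow_div_INR_succ; [|intro K; lia].
    split; [apply Rdiv_le_0_compat|]; [lra | lra |].
    apply (Rmult_le_reg_r (2 * PI)); [lra|]. field_simplify; lra.
Qed.

Lemma is_series_zeta_even_weighted a : 0 < a <= 1 ->
  is_series
    (fun n => zeta (2 * (n + 1)) * a ^ (2 * (n + 1)) / ((INR (n + 1) + 1) * (2 * INR (n + 1) + 1)))
    (1 / 2 - zeta 3 / (2 * PI ^ 2 * a ^ 2)
     + Cl3 (2 * PI * a) / (2 * PI ^ 2 * a ^ 2) + Cl2 (2 * PI * a) / (2 * PI * a)).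
Proof.
  intro Ha. pose proof PI_RGT_0 as HPI.
  set (x := 2 * PI * a).
  assert (Hx : 0 < x <= 2 * PI) by (unfold x; split; nra).
  assert (H := is_series_scal_r (2 / x ^ 2) _ _ (is_series_zeta_even_integral x Hx)).
  replace (1 / 2 - zeta 3 / (2 * PI ^ 2 * a ^ 2) + Cl3 x / (2 * PI ^ 2 * a ^ 2) + Cl2 x / x)
    with ((x ^ 2 / 4 + (Cl3 x - zeta 3 + x / 2 * Cl2 x)) * (2 / x ^ 2))
    by (unfold x; field; lra).
  revert H. apply is_series_ext_R. intro n.
  replace (x / (2 * PI)) with a by (unfold x; field; lra).
  assert (Hn := INR_succ_pos n).
  rewrite !S_INR, mult_INR. unfold x. simpl (INR 2). field. repeat split; nra.
Qed.

Lemma pow_even_abs y n : Rabs y ^ (2 * n) = y ^ (2 * n).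
Proof. now rewrite !pow_mult, pow2_abs. Qed.

Theorem corollary15 (z : R) (hz0 : 0 < Rabs z) (hz1 : Rabs z <= 1) :
  is_series
    (fun n : nat =>
       zeta (2 * (n + 1)) * z ^ (2 * (n + 1))
       / ((INR (n + 1) + 1) * (2 * INR (n + 1) + 1)))
    (1 / 2 - zeta 3 / (2 * PI ^ 2 * z ^ 2)
     + Cl3 (2 * PI * z) / (2 * PI ^ 2 * z ^ 2)
     + Cl2 (2 * PI * z) / (2 * PI * z)).
Proof.
  assert (H := is_series_zeta_even_weighted (Rabs z) (conj hz0 hz1)).
  replace (2 * PI * Rabs z) with (Rabs (2 * PI * z)) in H
    by (rewrite Rabs_mult, (Rabs_pos_eq (2 * PI)); [reflexivity | pose proof PI_RGT_0; lra]).
  rewrite Cl3_abs, Cl2_abs_div, pow2_abs in H.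
  revert H. apply is_series_ext_R. intro n. now rewrite pow_even_abs.
Qed.
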